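(* Let $k\ge1$, $A\subseteq\mathbb{R}$ open, $x\in A$ and $f\in C^k(A,\mathbb{R})$. Then for all $h\in D_k$, $${}^\bullet f(x+h)=\sum_{i=0}^k\frac{h^i}{i!}\,f^{(i)}(x)\quad\text{in }{}^\bullet\mathbb{R},$$ and the real coefficients $f^{(i)}(x)$, $i=0,\dots,k$, are uniquely determined by this formula (i.e. if $c_0,\dots,c_k\in\mathbb{R}$ satisfy ${}^\bullet f(x+h)=\sum_{i=0}^k\frac{h^i}{i!}c_i$ for all $h\in D_k$, then $c_i=f^{(i)}(x)$).
   Context: A function $x:\mathbb{R}\to\mathbb{R}$ is nilpotent if $|x(t)-x(0)|^m=o(t)$ as $t\to0$ for some $m\in\mathbb{N}$; for $A\subseteq\mathbb{R}$, $\mathrm{Nil}(A)$ is the set of nilpotent functions with values in $A$; $x\sim y$ iff $x(t)=y(t)+o(t)$ as $t\to0$. ${}^\bullet A:=\mathrm{Nil}(A)/\sim\subseteq{}^\bullet\mathbb{R}:=\mathrm{Nil}(\mathbb{R})/\sim$ (a commutative ring under pointwise operations, reals identified with constant functions). For locally Lipschitz $g:A\to\mathbb{R}$, ${}^\bullet g([y]):=[g\circ y]$. $D:=\{h\in{}^\bullet\mathbb{R}:\limsup_{t\to0}|h(t)/t|<+\infty\}$ and $D_k:=\{h\in{}^\bullet\mathbb{R}: h^k\in D\}$; elements of $D_k$ have standard part $0$, so $x+h\in{}^\bullet A$. *)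

From Stdlib Require Import Reals Factorial.
From Coquelicot Require Import Coquelicot.
Open Scope R_scope.

Definition little_o_t (y : R -> R) : Prop :=
  is_lim (fun t => y t / t) 0 0.

Definition nilpotent (x : R -> R) : Prop :=
  exists m : nat, little_o_t (fun t => Rabs (x t - x 0) ^ m).

(* x ~ y iff x(t) = y(t) + o(t);  equality in the Fermat reals *R *)
Definition fsim (x y : R -> R) : Prop := little_o_t (fun t => x t - y t).

(* limsup_{t->0} |y(t)/t| < +oo, written out: |y(t)/t| is eventually
   bounded on a punctured neighbourhood of 0 *)
Definition in_D (y : R -> R) : Prop :=
  exists M delta : R, 0 < delta /\
    forall t, t <> 0 -> Rabs t < delta -> Rabs (y t / t) <= M.

Definition in_Dk (k : nat) (h : R -> R) : Prop :=
  nilpotent h /\ in_D (fun t => h t ^ k).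

Definition Ck (k : nat) (A : R -> Prop) (f : R -> R) : Prop :=
  (forall i : nat, (i <= k)%nat -> forall y, A y -> ex_derive_n f i y) /\
  (forall y, A y -> continuous (Derive_n f k) y).

(* the Fermat extension *g([y]) = [g o y], on representatives *)
Definition fext (g : R -> R) (y : R -> R) : R -> R := fun t => g (y t).

Definition taylor_sum (k : nat) (c : nat -> R) (h : R -> R) : R -> R :=
  fun t => sum_n (fun i => h t ^ i / INR (Factorial.fact i) * c i) k.

(* Existence is Taylor's formula with Peano remainder: near [x] the error is
   at most [eps |u|^k], and for [h] in [D_k] the quantity [|h(t)|^k / |t|] is
   bounded, so the error at [u = h(t)] is [o(t)].  Uniqueness is tested on
   [h(t) = |t|^(1/k)], which lies in [D_k] and satisfies [|t| <= h(t)^p] near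
   [0] for every [p <= k].  Hence if [h(t)^p * sum_(i<=n) a_i h(t)^i = o(t)]
   with [p + n <= k], the sum itself tends to [0], so [a_0 = 0]; factoring out
   [h(t)] raises [p] by one and the argument repeats on the other coefficients. *)
From Stdlib Require Import Reals Lra Lia Factorial.
From Coquelicot Require Import Coquelicot.
Open Scope R_scope.

Lemma pow_lt_reg_l (a b : R) (k : nat) : 0 <= b -> a ^ k < b ^ k -> a < b.
Proof.
  intros Hb Hab. destruct (Rlt_or_le a b) as [Hlt|Hle]; [exact Hlt|].
  pose proof (pow_incr b a k (conj Hb Hle)). lra.
Qed.

Lemma Rabs_div_le_mul (a b c t : R) :
  0 <= c -> Rabs a <= c * Rabs b -> Rabs (a / t) <= c * Rabs (b / t).
Proof.
  intros Hc Hab. unfold Rdiv. rewrite !Rabs_mult.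
  pose proof (Rabs_pos (/ t)). nra.
Qed.

Lemma is_lim_0P (g : R -> R) (l : R) :
  is_lim g 0 l <-> forall eps, 0 < eps -> exists delta, 0 < delta /\
    forall t, t <> 0 -> Rabs t < delta -> Rabs (g t - l) < eps.
Proof.
  rewrite <- is_lim_spec. split.
  - intros H eps Heps. destruct (H (mkposreal eps Heps)) as [d Hd].
    exists d. split; [apply cond_pos|]. intros t Ht0 Ht.
    apply Hd; [|exact Ht0]. change (Rabs (t - 0) < d). now rewrite Rminus_0_r.
  - intros H eps. destruct (H eps (cond_pos eps)) as [d [Hd Hg]].
    exists (mkposreal d Hd). intros t Ht Ht0. apply Hg; [exact Ht0|].
    change (Rabs (t - 0) < d) in Ht. now rewrite Rminus_0_r in Ht.
Qed.

Lemma little_o_t_ext (y z : R -> R) :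
  (forall t, t <> 0 -> y t = z t) -> little_o_t y -> little_o_t z.
Proof.
  intros E. apply is_lim_ext_loc. exists (mkposreal 1 Rlt_0_1).
  intros t _ Ht. now rewrite E.
Qed.

Lemma little_o_t_minus (y z : R -> R) :
  little_o_t y -> little_o_t z -> little_o_t (fun t => y t - z t).
Proof.
  intros Hy Hz. pose proof (is_lim_minus' _ _ _ _ _ Hy Hz) as H.
  rewrite Rminus_0_r in H. eapply is_lim_ext; [|exact H].
  intros t. simpl. unfold Rdiv. ring.
Qed.

Lemma fsim_sub (g u v : R -> R) : fsim g u -> fsim g v -> little_o_t (fun t => v t - u t).
Proof.
  intros Hu Hv. eapply little_o_t_ext; [|exact (little_o_t_minus _ _ Hu Hv)].
  intros t _. cbv beta. ring.
Qed.

Definition poly_val (a : nat -> R) (n : nat) (u : R) : R :=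
  sum_f_R0 (fun i => a i * u ^ i) n.

Lemma poly_val_S (a : nat -> R) (n : nat) (u : R) :
  poly_val a (S n) u = a 0%nat + u * poly_val (fun i => a (S i)) n u.
Proof.
  unfold poly_val. rewrite decomp_sum by lia. simpl pred.
  rewrite pow_O, Rmult_1_r, scal_sum. f_equal.
  apply sum_eq. intros i _. simpl pow. ring.
Qed.

Lemma poly_val_last (a : nat -> R) (n : nat) (u : R) :
  poly_val a (S n) u = poly_val a n u + a (S n) * u ^ S n.
Proof. reflexivity. Qed.

Lemma poly_val_0 (a : nat -> R) (n : nat) : poly_val a n 0 = a 0%nat.
Proof. destruct n; [unfold poly_val; simpl; ring | rewrite poly_val_S; ring]. Qed.

Lemma poly_val_minus (a b : nat -> R) (n : nat) (u : R) :
  poly_val a n u - poly_val b n u = poly_val (fun i => a i - b i) n u.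
Proof. unfold poly_val. rewrite <- minus_sum. apply sum_eq. intros i _. ring. Qed.

Lemma continuous_poly_val (a : nat -> R) (n : nat) (u : R) : continuous (poly_val a n) u.
Proof.
  revert a. induction n as [|n IHn]; intros a.
  - apply (continuous_ext (fun _ => a 0%nat)).
    + intros v. unfold poly_val. simpl. ring.
    + apply continuous_const.
  - apply (continuous_ext (fun v : R => a 0%nat + v * poly_val (fun i => a (S i)) n v)).
    + intros v. now rewrite poly_val_S.
    + apply (continuous_plus (fun _ => a 0%nat) (fun v => v * poly_val (fun i => a (S i)) n v));
        [apply continuous_const|].
      apply (continuous_mult (fun v => v) (poly_val (fun i => a (S i)) n));
        [apply continuous_id | apply IHn].
Qed.

Lemma sum_taylor_poly_val (c : nat -> R) (n : nat) (u : R) :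
  sum_f_R0 (fun m => u ^ m / INR (fact m) * c m) n = poly_val (fun m => c m / INR (fact m)) n u.
Proof. apply sum_eq. intros m _. unfold Rdiv. ring. Qed.

Lemma taylor_sum_poly_val (k : nat) (c : nat -> R) (h : R -> R) (t : R) :
  taylor_sum k c h t = poly_val (fun i => c i / INR (fact i)) k (h t).
Proof. unfold taylor_sum. rewrite sum_n_Reals. apply sum_taylor_poly_val. Qed.

Definition taylor_coef (f : R -> R) (x : R) (i : nat) : R := Derive_n f i x / INR (fact i).

Lemma pow_opp_mul_sign (u : R) (m : nat) : (- u) ^ m * (-1) ^ m = u ^ m.
Proof. rewrite <- Rpow_mult_distr. f_equal. ring. Qed.

Section TaylorBall.

Variables (f : R -> R) (n : nat) (x eta : R).
Hypothesis Hder : forall z, Rabs (z - x) < eta -> forall m, (m <= S n)%nat -> ex_derive_n f m z.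

Lemma locally_ex_derive_n_ball (p : R) (j : nat) : Rabs (p - x) < eta -> (j <= S n)%nat ->
  locally p (fun y => forall m, (m <= j)%nat -> ex_derive_n f m y).
Proof.
  intros Hp Hj. assert (Hpos : 0 < eta - Rabs (p - x)) by lra.
  exists (mkposreal _ Hpos). intros y Hy m Hm.
  change (Rabs (y - p) < eta - Rabs (p - x)) in Hy.
  apply Hder; [|lia].
  pose proof (Rabs_triang (y - p) (p - x)) as T.
  replace (y - p + (p - x)) with (y - x) in T by ring. lra.
Qed.

(* [Taylor_Lagrange] only covers [x < x + u]; the case [u < 0] is reduced to
   it through [y |-> f (- y)]. *)
Lemma Taylor_Lagrange_ball (u : R) : u <> 0 -> Rabs u < eta ->
  exists zeta, Rabs (zeta - x) < Rabs u /\
    f (x + u) = sum_f_R0 (fun m => u ^ m / INR (fact m) * Derive_n f m x) n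
                + u ^ S n / INR (fact (S n)) * Derive_n f (S n) zeta.
Proof.
  intros Hu0 Hu. destruct (Rabs_def2 _ _ Hu) as [Hu1 Hu2].
  destruct (Rdichotomy u 0 Hu0) as [Hneg|Hpos].
  - rewrite Rabs_left by exact Hneg.
    destruct (Taylor_Lagrange (fun y => f (- y)) n (- x) (- x - u)) as [z [Hz E]]; [lra| |].
    { intros t Ht m Hm. apply ex_derive_n_comp_opp, (locally_ex_derive_n_ball _ m); [|lia].
      apply Rabs_def1; lra. }
    exists (- z). split; [apply Rabs_def1; lra|].
    replace (- (- x - u)) with (x + u) in E by ring.
    replace (- x - u - - x) with (- u) in E by ring.
    rewrite E. f_equal.
    + apply sum_eq. intros m Hm. rewrite Derive_n_comp_opp, Ropp_involutive.
      * rewrite <- (pow_opp_mul_sign u m). unfold Rdiv. ring.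
      * rewrite Ropp_involutive. apply locally_ex_derive_n_ball; [|lia].
        rewrite Rminus_diag, Rabs_R0. lra.
    + rewrite Derive_n_comp_opp.
      * rewrite <- (pow_opp_mul_sign u (S n)). unfold Rdiv. ring.
      * apply locally_ex_derive_n_ball; [apply Rabs_def1; lra | lia].
  - rewrite Rabs_right by lra.
    destruct (Taylor_Lagrange f n x (x + u)) as [z [Hz E]]; [lra| |].
    { intros t Ht m Hm. apply Hder; [apply Rabs_def1; lra | exact Hm]. }
    exists z. split; [apply Rabs_def1; lra|].
    replace (x + u - x) with u in E by ring. exact E.
Qed.

End TaylorBall.

Lemma taylor_peano (A : R -> Prop) (f : R -> R) (n : nat) (x : R) :
  open A -> A x -> Ck (S n) A f -> forall eps, 0 < eps -> exists eta, 0 < eta /\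
    forall u, Rabs u < eta ->
      Rabs (f (x + u) - poly_val (taylor_coef f x) (S n) u) <= eps * Rabs u ^ S n.
Proof.
  intros HO Hx [Hder Hcont] eps Heps.
  destruct (HO x Hx) as [e1 HA].
  set (F := INR (fact (S n))).
  assert (HF : 0 < F) by apply INR_fact_lt_0.
  assert (HeF : 0 < eps * F) by (apply Rmult_lt_0_compat; lra).
  destruct (Hcont x Hx _ (locally_ball (Derive_n f (S n) x) (mkposreal _ HeF))) as [e2 Hc].
  exists (Rmin e1 e2). split; [apply Rmin_pos; apply cond_pos|].
  intros u Hu. pose proof (Rmin_l e1 e2). pose proof (Rmin_r e1 e2).
  destruct (Req_dec u 0) as [->|Hu0].
  { rewrite Rplus_0_r, poly_val_0, Rabs_R0, pow_i by lia.
    unfold taylor_coef. simpl. unfold Rdiv. rewrite Rinv_1, Rmult_1_r, Rminus_diag, Rabs_R0. lra. }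
  destruct (Taylor_Lagrange_ball f n x e1 (fun z Hz m Hm => Hder m Hm z (HA z Hz)) u Hu0)
    as [z [Hz E]]; [lra|].
  assert (Hrem : f (x + u) - poly_val (taylor_coef f x) (S n) u
                 = u ^ S n * (Derive_n f (S n) z - Derive_n f (S n) x) / F).
  { rewrite E, sum_taylor_poly_val, poly_val_last. unfold taylor_coef, F, Rdiv. ring. }
  assert (Hclose : Rabs (Derive_n f (S n) z - Derive_n f (S n) x) < eps * F).
  { apply (Hc z). change (Rabs (z - x) < e2). lra. }
  rewrite Hrem. unfold Rdiv. rewrite !Rabs_mult, Rabs_inv, (Rabs_right F), <- RPow_abs by lra.
  assert (Hdiv : Rabs (Derive_n f (S n) z - Derive_n f (S n) x) * / F <= eps).
  { apply Rmult_le_reg_r with F; [exact HF|]. rewrite Rmult_assoc, Rinv_l by lra. lra. }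
  pose proof (pow_le (Rabs u) (S n) (Rabs_pos u)). nra.
Qed.

Lemma in_D_pow_small (h : R -> R) (k : nat) : in_D (fun t => h t ^ k) ->
  forall eta, 0 < eta -> exists delta, 0 < delta /\
    forall t, t <> 0 -> Rabs t < delta -> Rabs (h t) < eta.
Proof.
  intros [M [d0 [Hd0 HM]]] eta Heta.
  set (C := Rabs M + 1).
  assert (HMC : M < C) by (unfold C; pose proof (Rle_abs M); lra).
  assert (HC : 0 < C) by (unfold C; pose proof (Rabs_pos M); lra).
  assert (He : 0 < eta ^ k) by (apply pow_lt; lra).
  exists (Rmin d0 (eta ^ k / C)). split; [apply Rmin_pos; [lra | apply Rdiv_lt_0_compat; lra]|].
  intros t Ht0 Ht. pose proof (Rmin_l d0 (eta ^ k / C)). pose proof (Rmin_r d0 (eta ^ k / C)).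
  specialize (HM t Ht0 ltac:(lra)).
  apply (pow_lt_reg_l _ _ k); [lra|].
  assert (Hsplit : Rabs (h t) ^ k = Rabs (h t ^ k / t) * Rabs t).
  { rewrite RPow_abs, <- Rabs_mult. f_equal. field. exact Ht0. }
  assert (HCt : C * Rabs t < eta ^ k).
  { replace (eta ^ k) with (C * (eta ^ k / C)) by (field; lra).
    apply Rmult_lt_compat_l; lra. }
  pose proof (Rabs_pos t). rewrite Hsplit. nra.
Qed.

Lemma fsim_taylor (k : nat) (A : R -> Prop) (f : R -> R) (x : R) (h : R -> R) :
  (1 <= k)%nat -> open A -> A x -> Ck k A f -> in_D (fun t => h t ^ k) ->
  fsim (fext f (fun t => x + h t)) (taylor_sum k (fun i => Derive_n f i x) h).
Proof.
  intros Hk HO Hx HC Hh. destruct k as [|n]; [lia|].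
  apply is_lim_0P. intros eps Heps.
  pose proof Hh as [M [d0 [Hd0 HM]]].
  set (C := Rabs M + 1).
  assert (HCpos : 0 < C) by (unfold C; pose proof (Rabs_pos M); lra).
  destruct (taylor_peano A f n x HO Hx HC (eps / C)) as [eta [Heta Hpeano]];
    [apply Rdiv_lt_0_compat; lra|].
  destruct (in_D_pow_small h (S n) Hh eta Heta) as [d1 [Hd1 Hsmall]].
  exists (Rmin d0 d1). split; [apply Rmin_pos; lra|].
  intros t Ht0 Ht. pose proof (Rmin_l d0 d1). pose proof (Rmin_r d0 d1).
  specialize (HM t Ht0 ltac:(lra)).
  specialize (Hpeano (h t) (Hsmall t Ht0 ltac:(lra))).
  rewrite RPow_abs in Hpeano.
  unfold fext. rewrite taylor_sum_poly_val, Rminus_0_r.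
  eapply Rle_lt_trans.
  { apply (Rabs_div_le_mul _ (h t ^ S n) (eps / C)); [|exact Hpeano].
    apply Rlt_le, Rdiv_lt_0_compat; lra. }
  apply Rle_lt_trans with (eps / C * Rabs M).
  { apply Rmult_le_compat_l; [apply Rlt_le, Rdiv_lt_0_compat; lra|].
    pose proof (Rle_abs M). lra. }
  apply Rlt_le_trans with (eps / C * C); [|right; field; lra].
  apply Rmult_lt_compat_l; [apply Rdiv_lt_0_compat; lra | unfold C; lra].
Qed.

(* [|t|^(1/k)]; the case [t = 0] is separate because [Rpower 0 y = 1]. *)
Definition root_abs (k : nat) (t : R) : R :=
  if Req_dec_T t 0 then 0 else Rpower (Rabs t) (/ INR k).

Lemma root_abs_0 (k : nat) : root_abs k 0 = 0.
Proof. unfold root_abs. destruct (Req_dec_T 0 0); congruence. Qed.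

Lemma root_abs_nonneg (k : nat) (t : R) : 0 <= root_abs k t.
Proof. unfold root_abs. destruct (Req_dec_T t 0); [lra|]. left. apply exp_pos. Qed.

Section RootTest.

Variable k : nat.
Hypothesis Hk : (1 <= k)%nat.

Lemma root_abs_pow (t : R) : root_abs k t ^ k = Rabs t.
Proof.
  unfold root_abs. destruct (Req_dec_T t 0) as [->|Ht].
  - rewrite Rabs_R0. apply pow_i. lia.
  - assert (Hpos : 0 < Rabs t) by (apply Rabs_pos_lt; exact Ht).
    assert (HkR : INR k <> 0) by (apply not_0_INR; lia).
    rewrite <- Rpower_pow by apply exp_pos.
    rewrite Rpower_mult, Rinv_l, Rpower_1 by assumption.
    reflexivity.
Qed.

Lemma root_abs_lt (eps t : R) : 0 <= eps -> Rabs t < eps ^ k -> root_abs k t < eps.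
Proof. intros He Ht. apply (pow_lt_reg_l _ _ k He). now rewrite root_abs_pow. Qed.

Lemma Rabs_le_root_abs_pow (p : nat) (t : R) : (p <= k)%nat -> Rabs t < 1 ->
  Rabs t <= root_abs k t ^ p.
Proof.
  intros Hp Ht.
  assert (Hr1 : root_abs k t < 1) by (apply root_abs_lt; [lra | now rewrite pow1]).
  pose proof (root_abs_nonneg k t).
  assert (E : root_abs k t ^ k = root_abs k t ^ (k - p) * root_abs k t ^ p)
    by (rewrite <- pow_add; f_equal; lia).
  rewrite <- root_abs_pow, E.
  assert (root_abs k t ^ (k - p) <= 1) by (rewrite <- (pow1 (k - p)); apply pow_incr; lra).
  assert (0 <= root_abs k t ^ p) by (apply pow_le; lra).
  nra.
Qed.

Lemma is_lim_root_abs : is_lim (root_abs k) 0 0.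
Proof.
  apply is_lim_0P. intros eps Heps. exists (eps ^ k). split; [apply pow_lt; lra|].
  intros t _ Ht. rewrite Rminus_0_r, Rabs_right by apply Rle_ge, root_abs_nonneg.
  apply root_abs_lt; lra.
Qed.

Lemma root_abs_in_Dk : in_Dk k (root_abs k).
Proof.
  assert (Hdiv : forall t, t <> 0 -> Rabs (root_abs k t ^ k / t) = 1).
  { intros t Ht. rewrite root_abs_pow. unfold Rdiv.
    rewrite Rabs_mult, Rabs_inv, Rabs_Rabsolu. apply Rinv_r, Rabs_no_R0, Ht. }
  split.
  - exists (S k). apply is_lim_0P. intros eps Heps. exists (eps ^ k).
    split; [apply pow_lt; lra|]. intros t Ht0 Ht.
    rewrite root_abs_0, !Rminus_0_r, (Rabs_right (root_abs k t))
      by apply Rle_ge, root_abs_nonneg.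
    simpl pow. unfold Rdiv. rewrite Rmult_assoc, Rabs_mult.
    fold (root_abs k t ^ k / t). rewrite Hdiv, Rmult_1_r by exact Ht0.
    rewrite Rabs_right by apply Rle_ge, root_abs_nonneg.
    apply root_abs_lt; lra.
  - exists 1, 1. split; [lra|]. intros t Ht0 _. rewrite Hdiv by exact Ht0. lra.
Qed.

Lemma is_lim_of_little_o_root_pow (p : nat) (s : R -> R) : (p <= k)%nat ->
  little_o_t (fun t => root_abs k t ^ p * s t) -> is_lim s 0 0.
Proof.
  intros Hp Ho. apply is_lim_0P. intros eps Heps.
  destruct (proj1 (is_lim_0P _ _) Ho eps Heps) as [d [Hd Hs]].
  exists (Rmin d 1). split; [apply Rmin_pos; lra|].
  intros t Ht0 Ht. pose proof (Rmin_l d 1). pose proof (Rmin_r d 1).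
  specialize (Hs t Ht0 ltac:(lra)). rewrite Rminus_0_r in *.
  pose proof (Rabs_le_root_abs_pow p t Hp ltac:(lra)) as Hle.
  assert (Htpos : 0 < Rabs t) by (apply Rabs_pos_lt; exact Ht0).
  assert (E : Rabs (root_abs k t ^ p * s t / t) * Rabs t = root_abs k t ^ p * Rabs (s t)).
  { rewrite <- Rabs_mult.
    replace (root_abs k t ^ p * s t / t * t) with (root_abs k t ^ p * s t) by (field; exact Ht0).
    rewrite Rabs_mult, Rabs_right; [reflexivity | apply Rle_ge, pow_le, root_abs_nonneg]. }
  pose proof (Rabs_pos (s t)). nra.
Qed.

Lemma poly_val_root_little_o_head (p : nat) (a : nat -> R) (n : nat) : (p <= k)%nat ->
  little_o_t (fun t => root_abs k t ^ p * poly_val a n (root_abs k t)) -> a 0%nat = 0.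
Proof.
  intros Hp Ho.
  assert (Hlim : is_lim (fun t => poly_val a n (root_abs k t)) 0 (a 0%nat)).
  { rewrite <- (poly_val_0 a n).
    apply (is_lim_comp_continuous (root_abs k) (poly_val a n));
      [apply is_lim_root_abs | apply continuous_poly_val]. }
  apply is_lim_unique in Hlim.
  rewrite (is_lim_unique _ _ _ (is_lim_of_little_o_root_pow p _ Hp Ho)) in Hlim.
  injection Hlim. intros E. symmetry. exact E.
Qed.

Lemma poly_val_root_little_o (n : nat) : forall (p : nat) (a : nat -> R), (p + n <= k)%nat ->
  little_o_t (fun t => root_abs k t ^ p * poly_val a n (root_abs k t)) ->
  forall i, (i <= n)%nat -> a i = 0.
Proof.
  induction n as [|n IHn]; intros p a Hpn Ho [|i] Hi.
  - exact (poly_val_root_little_o_head p a 0 ltac:(lia) Ho).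
  - lia.
  - exact (poly_val_root_little_o_head p a (S n) ltac:(lia) Ho).
  - assert (Ha0 := poly_val_root_little_o_head p a (S n) ltac:(lia) Ho).
    apply (IHn (S p) (fun j => a (S j))); [lia| |lia].
    eapply little_o_t_ext; [|exact Ho]. intros t _.
    cbv beta. rewrite poly_val_S, Ha0. simpl pow. ring.
Qed.

End RootTest.

Theorem mainTheorem13 (k : nat) (A : R -> Prop) (x : R) (f : R -> R) :
  (1 <= k)%nat -> open A -> A x -> Ck k A f ->
  (forall h : R -> R, in_Dk k h ->
     fsim (fext f (fun t => x + h t)) (taylor_sum k (fun i => Derive_n f i x) h))
  /\
  (forall c : nat -> R,
     (forall h : R -> R, in_Dk k h ->
        fsim (fext f (fun t => x + h t)) (taylor_sum k c h)) ->
     forall i : nat, (i <= k)%nat -> c i = Derive_n f i x).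
Proof.
  intros Hk HO Hx HC.
  assert (Hexp : forall h, in_Dk k h ->
            fsim (fext f (fun t => x + h t)) (taylor_sum k (fun i => Derive_n f i x) h))
    by (intros h [_ Hh]; exact (fsim_taylor k A f x h Hk HO Hx HC Hh)).
  split; [exact Hexp|].
  intros c Hc i Hi.
  pose proof (root_abs_in_Dk k Hk) as Hroot.
  assert (Ho : little_o_t (fun t => root_abs k t ^ 0 *
                 poly_val (fun j => c j / INR (fact j) - taylor_coef f x j) k (root_abs k t))).
  { eapply little_o_t_ext; [|exact (fsim_sub _ _ _ (Hexp _ Hroot) (Hc _ Hroot))].
    intros t _. rewrite pow_O, Rmult_1_l, !taylor_sum_poly_val, poly_val_minus. reflexivity. }
  pose proof (poly_val_root_little_o k Hk k 0 _ ltac:(lia) Ho i Hi) as E.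
  unfold taylor_coef in E. pose proof (INR_fact_neq_0 i).
  apply Rminus_diag_uniq.
  replace (c i - Derive_n f i x)
    with ((c i / INR (fact i) - Derive_n f i x / INR (fact i)) * INR (fact i)) by (field; lra).
  rewrite E. ring.
Qed.
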